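(* Let $S$ be a formula such that $F_n(u,v)\in S$ for all $u,v\in S$ and $n\ge0$. Then $\mathbb{C}[D]\otimes S$, with the extended products and the operator $D$, is a vertex Lie superalgebra if and only if $F_n=0$ for all $n\ge1$ and $F_0:S\otimes S\to S$ is the bracket of a Lie superalgebra structure on $S$.
   Context: All spaces over $\mathbb{C}$; $\mathbb{N}=\{0,1,2,\dots\}$; $\varepsilon_{u,v}=(-1)^{|u||v|}$. A formula is a $\mathbb{Z}_2$-graded space $S$ with parity-preserving linear maps $F_n:S\otimes S\to\mathbb{C}[D]\otimes S$ ($n\in\mathbb{N}$; $\mathbb{C}[D]$, formal polynomials in $D$, is even) with $F_n(u,v)=0$ for $n$ large; write $u_nv=F_n(u,v)$, identify $S=1\otimes S$, and let $D(D^k\otimes u)=D^{k+1}\otimes u$. The products extend uniquely to bilinear products $A_nB$ ($n\in\mathbb{N}$) on $\mathbb{C}[D]\otimes S$ with $(DA)_nB=-nA_{n-1}B$ and $D(A_nB)=(DA)_nB+A_n(DB)$; explicitly $\sum_{n\ge0}(P(D)u)_n(Q(D)v)z^{-n-1}=P(\frac{d}{dz})Q(D-\frac{d}{dz})\sum_{n\ge0}(u_nv)z^{-n-1}$ for $u,v\in S$ and polynomials $P,Q$. A vertex Lie superalgebra is a $\mathbb{Z}_2$-graded space $U$ with an even operator $D$ and bilinear products $u_nv$ ($n\in\mathbb{N}$) such that for homogeneous $u,v,w$: $u_nv=0$ for $n$ large; $|u_nv|=|u|+|v|$; $(Du)_nv=-nu_{n-1}v$ (read as $0$ for $n=0$)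 and $D(u_nv)=(Du)_nv+u_n(Dv)$; $u_nv=-\varepsilon_{u,v}\sum_{k\ge0}(-1)^{n+k}\frac{D^k}{k!}v_{n+k}u$; and for all $k,m,n\in\mathbb{N}$, $\sum_{i\ge0}(-1)^i\binom{k}{i}(u_{m+k-i}(v_{n+i}w)-\varepsilon_{u,v}(-1)^kv_{n+k-i}(u_{m+i}w))=\sum_{i\ge0}\binom{m}{i}(u_{k+i}v)_{m+n-i}w$. *)

From HB Require Import structures.
From mathcomp Require Import all_boot all_algebra.
From mathcomp Require Import boolp reals complex.

Set Implicit Arguments.
Unset Strict Implicit.
Unset Printing Implicit Defensive.

Import GRing.Theory.
Local Open Scope ring_scope.

(* Z2-graded spaces.  A Z2-graded space is modelled as V0 * V1 (even   *)
(* (false = even, true = odd).                                         *)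

Definition homog (C : pzRingType) (V0 V1 : lmodType C) (b : bool)
  (x : V0 * V1) : Prop :=
  if b then x.1 = 0 else x.2 = 0.

Definition eps (C : pzRingType) (bu bv : bool) : C := (-1) ^+ (bu && bv).

Definition is_LieSuperalgebra (C : pzRingType) (S0 S1 : lmodType C)
  (br : S0 * S1 -> S0 * S1 -> S0 * S1) : Prop :=
  (forall (a : C) (x y z : S0 * S1), br (a *: x + y) z = a *: br x z + br y z)
  /\ (forall (a : C) (x y z : S0 * S1), br z (a *: x + y) = a *: br z x + br z y)
  /\ (forall bu bv (u v : S0 * S1), homog bu u -> homog bv v ->
        homog (bu (+) bv) (br u v))
  /\ (forall bu bv (u v : S0 * S1), homog bu u -> homog bv v ->
        br u v = - (eps C bu bv *: br v u))
  /\ (forall bu bv bw (u v w : S0 * S1), homog bu u -> homog bv v -> homog bw w ->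
        br u (br v w) = br (br u v) w + eps C bu bv *: br v (br u w)).

Definition is_VLSA (C : fieldType) (U0 U1 : lmodType C)
  (D : U0 * U1 -> U0 * U1) (prod : nat -> U0 * U1 -> U0 * U1 -> U0 * U1) : Prop :=
  (forall (a : C) (x y : U0 * U1), D (a *: x + y) = a *: D x + D y)
  /\ (forall b (x : U0 * U1), homog b x -> homog b (D x))
  /\ (forall n (a : C) (x y z : U0 * U1),
        prod n (a *: x + y) z = a *: prod n x z + prod n y z)
  /\ (forall n (a : C) (x y z : U0 * U1),
        prod n z (a *: x + y) = a *: prod n z x + prod n z y)
  /\ (forall bu bv (u v : U0 * U1), homog bu u -> homog bv v ->
        exists N, forall n, (N <= n)%N -> prod n u v = 0)
  /\ (forall bu bv (u v : U0 * U1) n, homog bu u -> homog bv v ->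
        homog (bu (+) bv) (prod n u v))
  /\ (forall bu bv (u v : U0 * U1) n, homog bu u -> homog bv v ->
        prod n (D u) v = - (n%:R *: prod n.-1 u v))
  /\ (forall bu bv (u v : U0 * U1) n, homog bu u -> homog bv v ->
        D (prod n u v) = prod n (D u) v + prod n u (D v))
  (* skew-symmetry; the (finite) sum over k >= 0 is truncated at any M
     beyond which all v_m u vanish *)
  /\ (forall bu bv (u v : U0 * U1) n M, homog bu u -> homog bv v ->
        (forall m, (M <= m)%N -> prod m v u = 0) ->
        prod n u v = - (eps C bu bv *:
          \sum_(k < M) (((-1) ^+ (n + k)%N * (k`!%:R)^-1) *: iter k D (prod (n + k)%N v u))))
  (* Borcherds-type identity; binomial coefficients vanish for i > k
     (left) and i > m (right), so the sums are finite *)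
  /\ (forall bu bv bw (u v w : U0 * U1) k m n,
        homog bu u -> homog bv v -> homog bw w ->
        \sum_(i < k.+1) ((-1) ^+ i * ('C(k, i))%:R) *:
            (prod (m + k - i)%N u (prod (n + i)%N v w)
             - eps C bu bv *: ((-1) ^+ k *: prod (n + k - i)%N v (prod (m + i)%N u w)))
        = \sum_(i < m.+1) ('C(m, i))%:R *: prod (m + n - i)%N (prod (k + i)%N u v) w).

(* C[D] (x) V : finitely supported coefficient sequences               *)
(*   f = sum_k D^k (x) f k.                                            *)
Definition finsupp (V : nmodType) (f : nat -> V) : Prop :=
  exists N, forall k, (N <= k)%N -> f k = 0.

Definition CD (C : pzRingType) (V : lmodType C) : Type :=
  {f : nat -> V | finsupp f}.

HB.instance Definition _ (C : pzRingType) (V : lmodType C) :=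
  gen_eqMixin (CD V).
HB.instance Definition _ (C : pzRingType) (V : lmodType C) :=
  gen_choiceMixin (CD V).

Lemma CD_ext (C : pzRingType) (V : lmodType C) (f g : CD V) :
  (forall k, sval f k = sval g k) -> f = g.
Proof.
case: f g => [f pf] [g pg] /= efg.
have e : f = g by apply: funext.
subst g; congr exist; exact: Prop_irrelevance.
Qed.

Lemma finsupp0 (V : nmodType) : finsupp (fun _ : nat => (0 : V)).
Proof. by exists 0%N. Qed.

Lemma finsuppD (V : nmodType) (f g : nat -> V) :
  finsupp f -> finsupp g -> finsupp (fun k => f k + g k).
Proof.
move=> [N hN] [M hM]; exists (maxn N M) => k hk.
rewrite hN ?hM ?addr0 //; apply: leq_trans hk;
  [exact: leq_maxr | exact: leq_maxl].
Qed.

Lemma finsuppN (V : zmodType) (f : nat -> V) :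
  finsupp f -> finsupp (fun k => - f k).
Proof. by move=> [N hN]; exists N => k hk; rewrite hN ?oppr0. Qed.

Lemma finsuppZ (C : pzRingType) (V : lmodType C) (a : C) (f : nat -> V) :
  finsupp f -> finsupp (fun k => a *: f k).
Proof. by move=> [N hN]; exists N => k hk; rewrite hN ?scaler0. Qed.

Definition CD_zero (C : pzRingType) (V : lmodType C) : CD V :=
  exist _ _ (@finsupp0 V).
Definition CD_add (C : pzRingType) (V : lmodType C) (f g : CD V) : CD V :=
  exist _ _ (finsuppD (proj2_sig f) (proj2_sig g)).
Definition CD_opp (C : pzRingType) (V : lmodType C) (f : CD V) : CD V :=
  exist _ _ (finsuppN (proj2_sig f)).
Definition CD_scale (C : pzRingType) (V : lmodType C) (a : C) (f : CD V) : CD V :=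
  exist _ _ (finsuppZ a (proj2_sig f)).

Lemma CD_addA (C : pzRingType) (V : lmodType C) : associative (@CD_add C V).
Proof. by move=> f g h; apply: CD_ext => k /=; rewrite addrA. Qed.
Lemma CD_addC (C : pzRingType) (V : lmodType C) : commutative (@CD_add C V).
Proof. by move=> f g; apply: CD_ext => k /=; rewrite addrC. Qed.
Lemma CD_add0 (C : pzRingType) (V : lmodType C) :
  left_id (@CD_zero C V) (@CD_add C V).
Proof. by move=> f; apply: CD_ext => k /=; rewrite add0r. Qed.
Lemma CD_addN (C : pzRingType) (V : lmodType C) :
  left_inverse (@CD_zero C V) (@CD_opp C V) (@CD_add C V).
Proof. by move=> f; apply: CD_ext => k /=; rewrite addNr. Qed.

HB.instance Definition _ (C : pzRingType) (V : lmodType C) :=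
  GRing.isZmodule.Build (CD V) (@CD_addA C V) (@CD_addC C V)
    (@CD_add0 C V) (@CD_addN C V).

Lemma CD_scaleA (C : pzRingType) (V : lmodType C) (a b : C) (f : CD V) :
  CD_scale a (CD_scale b f) = CD_scale (a * b) f.
Proof. by apply: CD_ext => k /=; rewrite scalerA. Qed.
Lemma CD_scale1 (C : pzRingType) (V : lmodType C) :
  left_id 1 (@CD_scale C V).
Proof. by move=> f; apply: CD_ext => k /=; rewrite scale1r. Qed.
Lemma CD_scaleDr (C : pzRingType) (V : lmodType C) :
  right_distributive (@CD_scale C V) +%R.
Proof. by move=> a f g; apply: CD_ext => k /=; rewrite scalerDr. Qed.
Lemma CD_scaleDl (C : pzRingType) (V : lmodType C) (f : CD V) :
  {morph (@CD_scale C V)^~ f : a b / a + b}.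
Proof. by move=> a b; apply: CD_ext => k /=; rewrite scalerDl. Qed.

HB.instance Definition _ (C : pzRingType) (V : lmodType C) :=
  GRing.Zmodule_isLmodule.Build C (CD V) (@CD_scaleA C V) (@CD_scale1 C V)
    (@CD_scaleDr C V) (@CD_scaleDl C V).

Definition CDcoef (C : pzRingType) (V : lmodType C) (f : CD V) (k : nat) : V :=
  sval f k.

Definition CDbound (C : pzRingType) (V : lmodType C) (f : CD V) : nat :=
  projT1 (cid (proj2_sig f)).

(* the operator D : D^k (x) v |-> D^{k+1} (x) v *)
Lemma finsupp_shift (V : nmodType) (f : nat -> V) :
  finsupp f -> finsupp (fun k => if k is k'.+1 then f k' else 0).
Proof. by move=> [N hN]; exists N.+1 => -[|k] //= hk; apply: hN. Qed.

Definition CDshift (C : pzRingType) (V : lmodType C) (f : CD V) : CD V :=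
  exist _ _ (finsupp_shift (proj2_sig f)).

(* the identification S = 1 (x) S *)
Lemma finsupp_emb (V : nmodType) (v : V) :
  finsupp (fun k : nat => if k is 0%N then v else 0).
Proof. by exists 1%N => -[|k]. Qed.

Definition CDemb (C : pzRingType) (V : lmodType C) (v : V) : CD V :=
  exist _ _ (finsupp_emb v).

Definition CDS (C : pzRingType) (S0 S1 : lmodType C) : Type :=
  (CD S0 * CD S1)%type.

Definition Dop (C : pzRingType) (S0 S1 : lmodType C) (A : CD S0 * CD S1) :
  CD S0 * CD S1 := (CDshift A.1, CDshift A.2).

Definition embS (C : pzRingType) (S0 S1 : lmodType C) (s : S0 * S1) :
  CD S0 * CD S1 := (CDemb s.1, CDemb s.2).

Definition coefS (C : pzRingType) (S0 S1 : lmodType C) (A : CD S0 * CD S1)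
  (k : nat) : S0 * S1 := (CDcoef A.1 k, CDcoef A.2 k).

Definition boundS (C : pzRingType) (S0 S1 : lmodType C) (A : CD S0 * CD S1) :
  nat := maxn (CDbound A.1) (CDbound A.2).

Definition is_formula (C : pzRingType) (S0 S1 : lmodType C)
  (F : nat -> S0 * S1 -> S0 * S1 -> CD S0 * CD S1) : Prop :=
  (forall n (a : C) (x y z : S0 * S1), F n (a *: x + y) z = a *: F n x z + F n y z)
  /\ (forall n (a : C) (x y z : S0 * S1), F n z (a *: x + y) = a *: F n z x + F n z y)
  /\ (forall n bu bv (u v : S0 * S1), homog bu u -> homog bv v ->
        homog (bu (+) bv) (F n u v))
  /\ (forall u v : S0 * S1, exists N, forall n, (N <= n)%N -> F n u v = 0).

(* The extended products on C[D] (x) S, via the explicit formula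
     (D^i u)_n (D^j v)
       = (-1)^i sum_{l=0}^{j} C(j,l) n(n-1)...(n-i-l+1) D^{j-l} F_{n-i-l}(u,v),
   which is the coefficient of z^{-n-1} in
     (d/dz)^i (D - d/dz)^j sum_n F_n(u,v) z^{-n-1},
   extended bilinearly:  A_n B = sum_{i,j} (D^i a_i)_n (D^j b_j). *)
Definition ext_prod (C : pzRingType) (S0 S1 : lmodType C)
  (F : nat -> S0 * S1 -> S0 * S1 -> CD S0 * CD S1) (n : nat)
  (A B : CD S0 * CD S1) : CD S0 * CD S1 :=
  \sum_(i < boundS A) \sum_(j < boundS B)
    ((-1) ^+ i : C) *: \sum_(l < j.+1)
       (('C(j, l) * n ^_ (i + l))%N%:R : C) *:
         iter (j - l) (@Dop C S0 S1) (F (n - i - l)%N (coefS A i) (coefS B j)).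

From HB Require Import structures.
From mathcomp Require Import all_boot all_algebra.
From mathcomp Require Import boolp reals complex.
From mathcomp Require Import zify.
Import GRing.Theory Num.Theory.
Local Open Scope ring_scope.

Set Implicit Arguments.
Unset Strict Implicit.
Unset Printing Implicit Defensive.

(* The extended products satisfy the two translation axioms of a vertex Lie
   superalgebra by construction.  Skew-symmetry and the commutator formula
   (the Borcherds identity with k = 0) are preserved by sums and by D in each
   argument, so if F_n = 0 for n >= 1 and F_0 is a Lie bracket they spread from
   S, where they are the antisymmetry and the Jacobi identity, to all of
   C[D] (x) S; the full Borcherds identity follows from the case k = 0 by
   induction on k.  Conversely, the D^m-coefficient of the skew-symmetry of
   u_0 v for u, v in S is a nonzero multiple of F_m(v, u), while u_0 v = F_0(u, v)
   lies in S; hence F_m = 0 for m >= 1, and skew-symmetry and the Borcherds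
   identity with k = m = n = 0 then say that F_0 is a Lie bracket. *)

Section LinearFun.
Variables (R : pzRingType) (U V : lmodType R) (f : U -> V).
Hypothesis f_lin : linear f.

Let fL : {linear U -> V} := HB.pack f (GRing.isLinear.Build R U V *:%R f f_lin).

Lemma linfun0 : f 0 = 0. Proof. exact: (raddf0 fL). Qed.
Lemma linfunD : {morph f : x y / x + y}. Proof. exact: (raddfD fL). Qed.
Lemma linfunN : {morph f : x / - x}. Proof. exact: (raddfN fL). Qed.
Lemma linfunB : {morph f : x y / x - y}. Proof. exact: (raddfB fL). Qed.
Lemma linfunZ a : {morph f : x / a *: x}. Proof. exact: (linearZZ fL). Qed.
Lemma linfun_sum I (r : seq I) (P : pred I) (E : I -> U) :
  f (\sum_(i <- r | P i) E i) = \sum_(i <- r | P i) f (E i).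
Proof. exact: (raddf_sum fL). Qed.

End LinearFun.

Section LinearClosure.
Variables (R : comPzRingType) (U V W : lmodType R).

Lemma linear_comp (f : V -> W) (g : U -> V) :
  linear f -> linear g -> linear (fun x => f (g x)).
Proof. by move=> hf hg a x y; rewrite hg hf. Qed.

Lemma linear_scale (c : R) (f : U -> V) : linear f -> linear (fun x => c *: f x).
Proof. by move=> hf a x y; rewrite hf scalerDr !scalerA mulrC. Qed.

Lemma linear_sum_fun n (f : 'I_n -> U -> V) :
  (forall i, linear (f i)) -> linear (fun x => \sum_(i < n) f i x).
Proof.
move=> hf a x y; rewrite scaler_sumr -big_split /=.
by apply: eq_bigr => i _; rewrite hf.
Qed.

Lemma linear_iter (f : U -> U) k : linear f -> linear (iter k f).
Proof. by move=> hf; elim: k => [|k IH] a x y //=; rewrite IH hf. Qed.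

End LinearClosure.

Lemma sumr_ord_trunc (V : nmodType) (g : nat -> V) K N :
  (forall k, (K <= k)%N -> g k = 0) -> (K <= N)%N ->
  \sum_(k < N) g k = \sum_(k < K) g k.
Proof.
move=> gK leKN; rewrite -(subnKC leKN) big_split_ord /= [X in _ + X]big1 ?addr0 //.
by move=> k _; apply: gK; rewrite leq_addr.
Qed.

Lemma sumr_ord_vanish_eq (V : nmodType) (g : nat -> V) K1 K2 :
  (forall k, (K1 <= k)%N -> g k = 0) -> (forall k, (K2 <= k)%N -> g k = 0) ->
  \sum_(k < K1) g k = \sum_(k < K2) g k.
Proof.
move=> van1 van2; case: (leqP K1 K2) => [le12|/ltnW le21].
  by rewrite (sumr_ord_trunc van1 le12).
by rewrite (sumr_ord_trunc van2 le21).
Qed.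

Section ScaledDifference.
Variables (C : comPzRingType) (U : lmodType C).

Lemma subZDD (e : C) (x1 x2 y1 y2 : U) :
  x1 + x2 - e *: (y1 + y2) = (x1 - e *: y1) + (x2 - e *: y2).
Proof. by rewrite scalerDr opprD addrACA. Qed.

Lemma subZZ (e c : C) (x y : U) : c *: x - e *: (c *: y) = c *: (x - e *: y).
Proof. by rewrite scalerBr !scalerA mulrC. Qed.

End ScaledDifference.

Section TranslationCovariance.
Variables (C : numFieldType) (U : lmodType C).
Variables (D : U -> U) (prod : nat -> U -> U -> U).
Hypothesis D_lin : linear D.
Hypothesis prod_linl : forall n w, linear (prod n ^~ w).
Hypothesis prod_linr : forall n u, linear (prod n u).
Hypothesis prod_Dl : forall n u v, prod n (D u) v = - (n%:R *: prod n.-1 u v).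
Hypothesis D_prod : forall n u v, D (prod n u v) = prod n (D u) v + prod n u (D v).
Hypothesis prod_eventually0 :
  forall u v, exists N, forall n, (N <= n)%N -> prod n u v = 0.

Lemma prod_Dr n u v : prod n u (D v) = D (prod n u v) + n%:R *: prod n.-1 u v.
Proof. by rewrite D_prod prod_Dl addrAC addNr add0r. Qed.

Let iter_D_lin k : linear (iter k D). Proof. exact: linear_iter. Qed.
Let prod0l n w : prod n 0 w = 0.
Proof. exact: (linfun0 (prod_linl n w)). Qed.
Let prod_addl n w : {morph prod n ^~ w : x y / x + y}.
Proof. exact: (linfunD (prod_linl n w)). Qed.
Let prodNl n w : {morph prod n ^~ w : x / - x}.
Proof. exact: (linfunN (prod_linl n w)). Qed.
Let prodZl n w a : {morph prod n ^~ w : x / a *: x}.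
Proof. exact: (linfunZ (prod_linl n w)). Qed.
Let prod_addr n u : {morph prod n u : x y / x + y}.
Proof. exact: (linfunD (prod_linr n u)). Qed.
Let prodNr n u : {morph prod n u : x / - x}.
Proof. exact: (linfunN (prod_linr n u)). Qed.
Let prodZr n u a : {morph prod n u : x / a *: x}.
Proof. exact: (linfunZ (prod_linr n u)). Qed.

Definition skew_coef n k : C := (-1) ^+ (n + k) * (k`!%:R)^-1.

Definition skew_sum u v n M :=
  \sum_(k < M) skew_coef n k *: iter k D (prod (n + k) v u).

Definition skew_symmetric e u v := exists M0, forall n M, (M0 <= M)%N ->
  prod n u v = - (e *: skew_sum u v n M).

Lemma skew_coefS n k : skew_coef n k.+1 * k.+1%:R = - skew_coef n k.
Proof.
rewrite /skew_coef addnS exprS factS natrM invfM mulN1r !mulNr -!mulrA.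
by congr (- (_ * _)); rewrite mulrCA mulVf ?mulr1 // pnatr_eq0.
Qed.

Lemma skew_coefSn n k : skew_coef n.+1 k = - skew_coef n k.
Proof. by rewrite /skew_coef addSn exprS mulN1r mulNr. Qed.

Lemma skew_sum_pred n M u v :
  \sum_(k < M) (skew_coef n k * n%:R) *: iter k D (prod (n + k).-1 v u)
  = - (n%:R *: skew_sum u v n.-1 M).
Proof.
case: n => [|n]; first by rewrite scale0r oppr0 big1 // => k _; rewrite mulr0 scale0r.
rewrite /skew_sum scaler_sumr -sumrN; apply: eq_bigr => k _.
by rewrite scalerA skew_coefSn mulNr mulrC scaleNr.
Qed.

(* In [v_(n+k) (D u)] the factor [n + k] splits; the [k]-parts telescope. *)
Lemma skew_sum_telescope n M u v : prod (n + M) v u = 0 ->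
  \sum_(k < M.+1) (skew_coef n k * k%:R) *: iter k D (prod (n + k).-1 v u)
  = - D (skew_sum u v n M.+1).
Proof.
move=> vanM; rewrite big_ord_recl mulr0 scale0r add0r.
rewrite /skew_sum (linfun_sum D_lin) big_ord_recr /= (linfunZ D_lin) vanM.
rewrite (linfun0 (iter_D_lin M)) (linfun0 D_lin) scaler0 addr0 -sumrN.
apply: eq_bigr => k _.
by rewrite /bump /= add0n skew_coefS scaleNr addnS (linfunZ D_lin).
Qed.

Lemma skew_symmetric_Dl e u v : skew_symmetric e u v -> skew_symmetric e (D u) v.
Proof.
case=> M0 skew_uv; have [N vanN] := prod_eventually0 v u.
exists (maxn M0 N).+1 => n [//|M] leM.
rewrite prod_Dl (skew_uv _ M.+1); last by lia.
have -> : skew_sum (D u) v n M.+1 =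
  D (skew_sum u v n M.+1)
  + \sum_(k < M.+1) (skew_coef n k * k%:R) *: iter k D (prod (n + k).-1 v u)
  + \sum_(k < M.+1) (skew_coef n k * n%:R) *: iter k D (prod (n + k).-1 v u).
  rewrite /skew_sum (linfun_sum D_lin) -!big_split /=; apply: eq_bigr => k _.
  rewrite prod_Dr (linfunD (iter_D_lin k)) !(linfunZ (iter_D_lin k)).
  rewrite (linfunZ D_lin) -iterSr scalerDr scalerA -addrA -scalerDl -mulrDr -natrD.
  by rewrite addnC.
rewrite skew_sum_telescope; last by apply: vanN; lia.
rewrite addrN add0r skew_sum_pred.
by rewrite !scalerN !opprK !scalerA mulrC.
Qed.

Lemma skew_symmetric_Dr e u v : skew_symmetric e u v -> skew_symmetric e u (D v).
Proof.
case=> M0 skew_uv; have [N vanN] := prod_eventually0 v u.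
exists (maxn M0 N).+1 => n [//|M] leM.
rewrite prod_Dr !(skew_uv _ M.+1); try lia.
have -> : skew_sum u (D v) n M.+1 =
  - (\sum_(k < M.+1) (skew_coef n k * n%:R) *: iter k D (prod (n + k).-1 v u)
     + \sum_(k < M.+1) (skew_coef n k * k%:R) *: iter k D (prod (n + k).-1 v u)).
  rewrite -big_split -sumrN /=; apply: eq_bigr => k _.
  rewrite prod_Dl (linfunN (iter_D_lin k)) (linfunZ (iter_D_lin k)).
  by rewrite scalerN scalerA -scalerDl -mulrDr -natrD.
rewrite skew_sum_pred skew_sum_telescope; last by apply: vanN; lia.
rewrite (linfunN D_lin) (linfunZ D_lin) opprD !opprK scalerDr !scalerN !scalerA.
by rewrite mulrC opprD addrC.
Qed.

Lemma skew_symmetric_addl e u1 u2 v :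
  skew_symmetric e u1 v -> skew_symmetric e u2 v -> skew_symmetric e (u1 + u2) v.
Proof.
case=> M1 skew1 [M2 skew2]; exists (maxn M1 M2) => n M leM.
rewrite prod_addl (skew1 n M) ?(skew2 n M); try lia.
rewrite -opprD -scalerDr /skew_sum -big_split /=; congr (- (_ *: _)).
apply: eq_bigr => k _.
by rewrite prod_addr (linfunD (iter_D_lin k)) scalerDr.
Qed.

Lemma skew_symmetric_addr e u v1 v2 :
  skew_symmetric e u v1 -> skew_symmetric e u v2 -> skew_symmetric e u (v1 + v2).
Proof.
case=> M1 skew1 [M2 skew2]; exists (maxn M1 M2) => n M leM.
rewrite prod_addr (skew1 n M) ?(skew2 n M); try lia.
rewrite -opprD -scalerDr /skew_sum -big_split /=; congr (- (_ *: _)).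
apply: eq_bigr => k _.
by rewrite prod_addl (linfunD (iter_D_lin k)) scalerDr.
Qed.

Lemma skew_symmetric_trunc e u v : skew_symmetric e u v ->
  forall n M, (forall m, (M <= m)%N -> prod m v u = 0) ->
  prod n u v = - (e *: skew_sum u v n M).
Proof.
case=> M0 skew_uv n M vanM; rewrite (skew_uv n (maxn M0 M)) ?leq_maxl //.
pose g k := skew_coef n k *: iter k D (prod (n + k) v u).
rewrite /skew_sum (sumr_ord_trunc (g := g) (K := M)) ?leq_maxr // => k leMk.
by rewrite /g vanM ?(leq_trans leMk (leq_addl _ _)) // (linfun0 (iter_D_lin k)) scaler0.
Qed.

Definition comm_lhs e u v w m n :=
  prod m u (prod n v w) - e *: prod n v (prod m u w).

Definition comm_rhs u v w m n :=
  \sum_(i < m.+1) 'C(m, i)%:R *: prod (m + n - i) (prod i u v) w.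

Definition commutator_formula e u v w :=
  forall m n, comm_lhs e u v w m n = comm_rhs u v w m n.

Lemma comm_lhs_Du e u v w m n :
  comm_lhs e (D u) v w m n = - (m%:R *: comm_lhs e u v w m.-1 n).
Proof.
rewrite /comm_lhs !prod_Dl prodNr prodZr.
by rewrite -subZZ opprB scalerN opprK addrC.
Qed.

Lemma comm_lhs_Dv e u v w m n :
  comm_lhs e u (D v) w m n = - (n%:R *: comm_lhs e u v w m n.-1).
Proof.
rewrite /comm_lhs !prod_Dl prodNr prodZr.
by rewrite -subZZ opprB scalerN opprK addrC.
Qed.

Lemma comm_lhs_Dw e u v w m n : comm_lhs e u v (D w) m n =
  D (comm_lhs e u v w m n) + m%:R *: comm_lhs e u v w m.-1 n
  + n%:R *: comm_lhs e u v w m n.-1.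
Proof.
rewrite /comm_lhs !prod_Dr !prod_addr !prodZr.
rewrite !prod_Dr (linfunB D_lin) (linfunZ D_lin) [in e *: _]addrAC.
by rewrite !subZDD !subZZ.
Qed.

Lemma comm_rhs_Du u v w m n :
  comm_rhs (D u) v w m n = - (m%:R *: comm_rhs u v w m.-1 n).
Proof.
rewrite /comm_rhs; case: m => [|m].
  by rewrite big_ord1 prod_Dl !scale0r oppr0 prod0l scaler0.
rewrite big_ord_recl /= prod_Dl scale0r oppr0 prod0l scaler0 add0r.
rewrite scaler_sumr -sumrN; apply: eq_bigr => j _ /=.
rewrite prod_Dl prodNl prodZl scalerN !scalerA.
have -> : (m.+1 + n - j.+1 = m + n - j)%N by lia.
by rewrite -!natrM mul_bin_diag mulnC.
Qed.

Lemma comm_rhs_predm u v w m n : m%:R *: comm_rhs u v w m.-1 n =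
  \sum_(i < m.+1) ('C(m, i) * (m - i))%:R *: prod (m + n - i).-1 (prod i u v) w.
Proof.
rewrite /comm_rhs; case: m => [|m]; first by rewrite scale0r big_ord1 muln0 scale0r.
rewrite [RHS]big_ord_recr /= subnn muln0 scale0r addr0 scaler_sumr.
apply: eq_bigr => i _ /=; rewrite scalerA -natrM.
have -> : (m + n - i = (m.+1 + n - i).-1)%N by have := ltn_ord i; lia.
by rewrite mul_bin_down mulnC.
Qed.

Lemma comm_rhs_predn u v w m n : n%:R *: comm_rhs u v w m n.-1 =
  \sum_(i < m.+1) ('C(m, i) * n)%:R *: prod (m + n - i).-1 (prod i u v) w.
Proof.
rewrite /comm_rhs; case: n => [|n].
  by rewrite scale0r big1 // => i _; rewrite muln0 scale0r.
rewrite scaler_sumr; apply: eq_bigr => i _; rewrite scalerA -natrM mulnC.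
by have -> : (m + n - i = (m + n.+1 - i).-1)%N by have := ltn_ord i; lia.
Qed.

Lemma comm_rhs_pred u v w m n :
  \sum_(i < m.+1) ('C(m, i) * (m + n - i))%:R *: prod (m + n - i).-1 (prod i u v) w
  = m%:R *: comm_rhs u v w m.-1 n + n%:R *: comm_rhs u v w m n.-1.
Proof.
rewrite comm_rhs_predm comm_rhs_predn -big_split /=; apply: eq_bigr => i _.
rewrite -scalerDl -natrD -mulnDr.
by have -> : (m + n - i = m - i + n)%N by have := ltn_ord i; lia.
Qed.

Lemma comm_rhs_reindex u v w m n :
  \sum_(i < m.+1) ('C(m, i) * i)%:R *: prod (m + n - i) (prod i.-1 u v) w
  = \sum_(i < m.+1) ('C(m, i) * (m - i))%:R *: prod (m + n - i).-1 (prod i u v) w.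
Proof.
case: m => [|m]; first by rewrite !big_ord1 /= !muln0 !scale0r.
rewrite big_ord_recl [RHS]big_ord_recr /= muln0 subnn muln0 !scale0r add0r addr0.
apply: eq_bigr => j _; rewrite /bump /=.
have -> : (m.+1 + n - j.+1 = (m.+1 + n - j).-1)%N by have := ltn_ord j; lia.
by rewrite mulnC mul_bin_left mulnC add0n.
Qed.

Lemma comm_rhs_Dv u v w m n :
  comm_rhs u (D v) w m n = - (n%:R *: comm_rhs u v w m n.-1).
Proof.
have -> : comm_rhs u (D v) w m n =
  - (\sum_(i < m.+1) ('C(m, i) * (m + n - i))%:R *: prod (m + n - i).-1 (prod i u v) w)
  + \sum_(i < m.+1) ('C(m, i) * i)%:R *: prod (m + n - i) (prod i.-1 u v) w.
  rewrite /comm_rhs -sumrN -big_split /=; apply: eq_bigr => i _.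
  by rewrite prod_Dr prod_addl prodZl prod_Dl scalerDr scalerN !scalerA -!natrM.
by rewrite comm_rhs_pred comm_rhs_reindex -comm_rhs_predm opprD addrAC addNr add0r.
Qed.

Lemma comm_rhs_Dw u v w m n : comm_rhs u v (D w) m n =
  D (comm_rhs u v w m n) + m%:R *: comm_rhs u v w m.-1 n
  + n%:R *: comm_rhs u v w m n.-1.
Proof.
rewrite -addrA -comm_rhs_pred /comm_rhs (linfun_sum D_lin) -big_split /=.
apply: eq_bigr => i _.
by rewrite prod_Dr scalerDr (linfunZ D_lin) scalerA -natrM.
Qed.

Lemma commutator_formula_Du e u v w :
  commutator_formula e u v w -> commutator_formula e (D u) v w.
Proof. by move=> cf m n; rewrite comm_lhs_Du comm_rhs_Du cf. Qed.

Lemma commutator_formula_Dv e u v w :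
  commutator_formula e u v w -> commutator_formula e u (D v) w.
Proof. by move=> cf m n; rewrite comm_lhs_Dv comm_rhs_Dv cf. Qed.

Lemma commutator_formula_Dw e u v w :
  commutator_formula e u v w -> commutator_formula e u v (D w).
Proof. by move=> cf m n; rewrite comm_lhs_Dw comm_rhs_Dw !cf. Qed.

Lemma commutator_formula_addu e u1 u2 v w :
  commutator_formula e u1 v w -> commutator_formula e u2 v w ->
  commutator_formula e (u1 + u2) v w.
Proof.
move=> cf1 cf2 m n.
have -> : comm_lhs e (u1 + u2) v w m n = comm_lhs e u1 v w m n + comm_lhs e u2 v w m n.
  by rewrite /comm_lhs !prod_addl prod_addr subZDD.
rewrite cf1 cf2 /comm_rhs -big_split /=; apply: eq_bigr => i _.
by rewrite !prod_addl scalerDr.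
Qed.

Lemma commutator_formula_addv e u v1 v2 w :
  commutator_formula e u v1 w -> commutator_formula e u v2 w ->
  commutator_formula e u (v1 + v2) w.
Proof.
move=> cf1 cf2 m n.
have -> : comm_lhs e u (v1 + v2) w m n = comm_lhs e u v1 w m n + comm_lhs e u v2 w m n.
  by rewrite /comm_lhs !prod_addl prod_addr subZDD.
rewrite cf1 cf2 /comm_rhs -big_split /=; apply: eq_bigr => i _.
by rewrite prod_addr prod_addl scalerDr.
Qed.

Lemma commutator_formula_addw e u v w1 w2 :
  commutator_formula e u v w1 -> commutator_formula e u v w2 ->
  commutator_formula e u v (w1 + w2).
Proof.
move=> cf1 cf2 m n.
have -> : comm_lhs e u v (w1 + w2) m n = comm_lhs e u v w1 m n + comm_lhs e u v w2 m n.
  by rewrite /comm_lhs !prod_addr subZDD.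
rewrite cf1 cf2 /comm_rhs -big_split /=; apply: eq_bigr => i _.
by rewrite prod_addr scalerDr.
Qed.

End TranslationCovariance.

Lemma sum_signed_binS (R : pzRingType) (V : lmodType R) (h : nat -> V) k :
  \sum_(i < k.+2) ((-1) ^+ i * 'C(k.+1, i)%:R) *: h i
  = \sum_(i < k.+1) ((-1) ^+ i * 'C(k, i)%:R) *: h i
    - \sum_(i < k.+1) ((-1) ^+ i * 'C(k, i)%:R) *: h i.+1.
Proof.
rewrite big_ord_recl [X in X - _]big_ord_recl /= !bin0.
have -> : \sum_(i < k.+1)
    ((-1) ^+ lift ord0 i * 'C(k.+1, lift ord0 i)%:R) *: h (lift ord0 i)
  = \sum_(i < k.+1) ((-1) ^+ i.+1 * 'C(k, i.+1)%:R) *: h i.+1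
    - \sum_(i < k.+1) ((-1) ^+ i * 'C(k, i)%:R) *: h i.+1.
  rewrite -sumrB; apply: eq_bigr => i _; rewrite /bump /=.
  by rewrite binS natrD mulrDr scalerDl exprS mulN1r [in X in _ + X]mulNr scaleNr.
rewrite addrA; congr (_ + _ - _).
rewrite big_ord_recr /= bin_small // mulr0 scale0r addr0.
by apply: eq_bigr => i _; rewrite /bump /= add1n.
Qed.

Section Borcherds.
Variables (C : numFieldType) (U : lmodType C) (prod : nat -> U -> U -> U).
Variables (e : C) (u v w : U).

Definition borcherds_lhs k m n :=
  \sum_(i < k.+1) ((-1) ^+ i * 'C(k, i)%:R) *:
    (prod (m + k - i) u (prod (n + i) v w)
     - e *: ((-1) ^+ k *: prod (n + k - i) v (prod (m + i) u w))).

Definition borcherds_rhs k m n :=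
  \sum_(i < m.+1) 'C(m, i)%:R *: prod (m + n - i) (prod (k + i) u v) w.

Let lhs_uv k m n := \sum_(i < k.+1) ((-1) ^+ i * 'C(k, i)%:R) *:
  prod (m + k - i) u (prod (n + i) v w).
Let lhs_vu k m n := \sum_(i < k.+1) ((-1) ^+ i * 'C(k, i)%:R) *:
  prod (n + k - i) v (prod (m + i) u w).

Lemma borcherds_lhs_split k m n :
  borcherds_lhs k m n = lhs_uv k m n - (e * (-1) ^+ k) *: lhs_vu k m n.
Proof.
rewrite /borcherds_lhs scaler_sumr -sumrB; apply: eq_bigr => i _.
by rewrite scalerBr !scalerA [e * _ * _]mulrC !mulrA.
Qed.

Lemma lhs_uvS k m n : lhs_uv k.+1 m n = lhs_uv k m.+1 n - lhs_uv k m n.+1.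
Proof.
rewrite /lhs_uv (sum_signed_binS (fun i => prod (m + k.+1 - i) u (prod (n + i) v w))).
congr (_ - _); apply: eq_bigr => i _; congr (_ *: _).
- by rewrite addSnnS.
- by rewrite !addnS subSS addSn.
Qed.

Lemma lhs_vuS k m n : lhs_vu k.+1 m n = lhs_vu k m n.+1 - lhs_vu k m.+1 n.
Proof.
rewrite /lhs_vu (sum_signed_binS (fun i => prod (n + k.+1 - i) v (prod (m + i) u w))).
congr (_ - _); apply: eq_bigr => i _; congr (_ *: _).
- by rewrite addSnnS.
- by rewrite !addnS subSS addSn.
Qed.

Lemma borcherds_lhsS k m n :
  borcherds_lhs k.+1 m n = borcherds_lhs k m.+1 n - borcherds_lhs k m n.+1.
Proof.
rewrite !borcherds_lhs_split lhs_uvS lhs_vuS exprS mulN1r mulrN scaleNr opprK.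
rewrite scalerBr !opprB -!addrA; congr (_ + _).
by rewrite addrCA [RHS]addrCA; congr (_ + _); exact: addrC.
Qed.

Lemma borcherds_rhsS k m n :
  borcherds_rhs k.+1 m n = borcherds_rhs k m.+1 n - borcherds_rhs k m n.+1.
Proof.
pose G j := prod (m + n - j) (prod (k + j.+1) u v) w.
pose G0 := prod (m + n.+1) (prod k u v) w.
have -> : borcherds_rhs k m.+1 n = G0 + \sum_(j < m.+1) 'C(m, j.+1)%:R *: G j
                                  + \sum_(j < m.+1) 'C(m, j)%:R *: G j.
  rewrite /borcherds_rhs big_ord_recl /= bin0 scale1r addn0 subn0 addSnnS.
  rewrite -addrA -big_split /=; congr (_ + _); apply: eq_bigr => j _.
  rewrite /bump /= add1n binS natrD scalerDl /G.
  by have -> : (m + n.+1 - j.+1 = m + n - j)%N by lia.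
have -> : borcherds_rhs k m n.+1 = G0 + \sum_(j < m.+1) 'C(m, j.+1)%:R *: G j.
  rewrite /borcherds_rhs big_ord_recl /= bin0 scale1r addn0 subn0; congr (_ + _).
  rewrite [RHS]big_ord_recr /= bin_small // scale0r addr0.
  apply: eq_bigr => j _; rewrite /bump /= add1n /G.
  by have -> : (m + n.+1 - j.+1 = m + n - j)%N by lia.
rewrite addrAC subrr add0r /borcherds_rhs; apply: eq_bigr => j _.
by rewrite /G addSnnS.
Qed.

Lemma borcherds_of_commutator_formula :
  commutator_formula prod e u v w ->
  forall k m n, borcherds_lhs k m n = borcherds_rhs k m n.
Proof.
move=> cf; elim=> [|k IH] m n; last by rewrite borcherds_lhsS borcherds_rhsS !IH.
rewrite /borcherds_lhs /borcherds_rhs big_ord1 expr0 mul1r bin0 !scale1r !addn0 !subn0.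
exact: cf.
Qed.

End Borcherds.

Section Homogeneous.
Variables (C : pzRingType) (V0 V1 : lmodType C).

Lemma homog0 b : homog b (0 : V0 * V1).
Proof. by case: b. Qed.

Lemma homogD b (x y : V0 * V1) : homog b x -> homog b y -> homog b (x + y).
Proof. by case: b; rewrite /homog /= => -> ->; rewrite addr0. Qed.

Lemma homogZ b a (x : V0 * V1) : homog b x -> homog b (a *: x).
Proof. by case: b; rewrite /homog /= => ->; rewrite scaler0. Qed.

Lemma homog_sum b n (g : 'I_n -> V0 * V1) :
  (forall i, homog b (g i)) -> homog b (\sum_(i < n) g i).
Proof. by move=> hg; apply: big_ind => //; [exact: homog0 | exact: homogD]. Qed.

Lemma bilinear_homog_eq0 (W : lmodType C) (f : V0 * V1 -> V0 * V1 -> W) :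
  (forall v, linear (f ^~ v)) -> (forall u, linear (f u)) ->
  (forall bu bv u v, homog bu u -> homog bv v -> f u v = 0) ->
  forall u v, f u v = 0.
Proof.
move=> linl linr f0 [u0 u1] [v0 v1].
have split2 (a0 : V0) (a1 : V1) : (a0, a1) = (a0, 0) + (0, a1).
  by congr pair; rewrite /= ?addr0 ?add0r.
rewrite (split2 u0) (split2 v0) (linfunD (linl _)) !(linfunD (linr _)).
have h0 (a : V0) : homog false ((a, 0) : V0 * V1) by [].
have h1 (a : V1) : homog true ((0, a) : V0 * V1) by [].
rewrite (f0 _ _ _ _ (h0 u0) (h0 v0)) (f0 _ _ _ _ (h0 u0) (h1 v1)).
by rewrite (f0 _ _ _ _ (h1 u1) (h0 v0)) (f0 _ _ _ _ (h1 u1) (h1 v1)) !addr0.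
Qed.

End Homogeneous.

Section PolynomialSpace.
Variables (C : pzRingType) (S0 S1 : lmodType C).
Local Notation S := (S0 * S1)%type.
Local Notation U := (CD S0 * CD S1)%type.
Local Notation D := (@Dop C S0 S1).

Lemma CDshift0 (V : lmodType C) : CDshift (0 : CD V) = 0.
Proof. by apply: CD_ext => -[]. Qed.

Lemma CDemb0 (V : lmodType C) : CDemb (0 : V) = 0.
Proof. by apply: CD_ext => -[]. Qed.

Lemma coefS_ext (A B : U) : (forall k, coefS A k = coefS B k) -> A = B.
Proof.
case: A B => [a0 a1] [b0 b1] eqAB; congr pair; apply: CD_ext => k.
  exact: (congr1 fst (eqAB k)).
exact: (congr1 snd (eqAB k)).
Qed.

Lemma coefS_linear k : linear (fun A : U => coefS A k).
Proof. by []. Qed.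

Lemma coefS_bound (A : U) k : (boundS A <= k)%N -> coefS A k = 0.
Proof.
rewrite /boundS geq_max /coefS /CDcoef /CDbound.
case: (cid (proj2_sig A.1)) => N0 /= van0; case: (cid (proj2_sig A.2)) => N1 /= van1.
by case/andP=> le0 le1; rewrite van0 ?van1.
Qed.

Definition coefS_vanish (A : U) N := forall i, (N <= i)%N -> coefS A i = 0.

Lemma coefS_vanish_bound (A : U) : coefS_vanish A (boundS A).
Proof. by move=> i; apply: coefS_bound. Qed.

Lemma coefS_vanish_le (A : U) N N' : (N <= N')%N -> coefS_vanish A N -> coefS_vanish A N'.
Proof. by move=> leNN' vanA i /(leq_trans leNN'); apply: vanA. Qed.

Lemma coefS_vanish_lin a (A B : U) N :
  coefS_vanish A N -> coefS_vanish B N -> coefS_vanish (a *: A + B) N.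
Proof.
by move=> vanA vanB i le; rewrite (coefS_linear i) vanA // vanB // scaler0 addr0.
Qed.

Lemma coefS_Dop (A : U) k : coefS (D A) k = if k is k'.+1 then coefS A k' else 0.
Proof. by case: k. Qed.

Lemma coefS_embS (s : S) k : coefS (embS s) k = if k is 0 then s else 0.
Proof. by case: s => ? ?; case: k. Qed.

Lemma Dop_linear : linear D.
Proof.
move=> a x y; apply: coefS_ext => k; rewrite (coefS_linear k) !coefS_Dop.
by case: k => [|k]; rewrite ?scaler0 ?addr0.
Qed.

Lemma coefS_iter_Dop (A : U) j k :
  coefS (iter j D A) k = if (j <= k)%N then coefS A (k - j) else 0.
Proof.
elim: j k => [|j IH] k /=; first by rewrite subn0.
by rewrite coefS_Dop; case: k => [|k] //=; rewrite IH subSS.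
Qed.

Lemma embS_linear : linear (@embS C S0 S1).
Proof.
move=> a x y; apply: coefS_ext => k; rewrite (coefS_linear k) !coefS_embS.
by case: k => [|k] //; rewrite scaler0 addr0.
Qed.

Lemma embS_inj : injective (@embS C S0 S1).
Proof. by move=> x y /(congr1 (fun A : U => coefS A 0)); rewrite !coefS_embS. Qed.

Lemma embS0 : embS (0 : S) = 0.
Proof. exact: linfun0 embS_linear. Qed.

Lemma homog_Dop b (A : U) : homog b A -> homog b (D A).
Proof. by case: b; rewrite /homog /= => ->; rewrite CDshift0. Qed.

Lemma homog_iter_Dop b (A : U) k : homog b A -> homog b (iter k D A).
Proof. by move=> hA; elim: k => //= k; apply: homog_Dop. Qed.

Lemma homog_coefS b (A : U) k : homog b A -> homog b (coefS A k).
Proof. by case: b; rewrite /homog /coefS /= => ->. Qed.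

Lemma homog_embS b (s : S) : homog b (embS s) <-> homog b s.
Proof.
split; case: b; rewrite /homog /embS /=.
- by move/(congr1 (fun f => sval f 0%N)).
- by move/(congr1 (fun f => sval f 0%N)).
- by move=> ->; rewrite CDemb0.
- by move=> ->; rewrite CDemb0.
Qed.

Lemma finsupp_tail (V : nmodType) (f : nat -> V) :
  finsupp f -> finsupp (fun k => f k.+1).
Proof. by case=> N vanN; exists N => k leNk; apply/vanN/leqW. Qed.

Definition CDtail (V : lmodType C) (f : CD V) : CD V :=
  exist _ _ (finsupp_tail (proj2_sig f)).

Definition tailS (A : U) : U := (CDtail A.1, CDtail A.2).

Lemma embS_add_Dop_tailS (A : U) : A = embS (coefS A 0) + D (tailS A).
Proof.
apply: coefS_ext => k; rewrite (linfunD (coefS_linear k)) coefS_embS coefS_Dop.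
by case: k => [|k]; rewrite ?addr0 ?add0r.
Qed.

Lemma homog_tailS b (A : U) : homog b A -> homog b (tailS A).
Proof.
have tail0 (V : lmodType C) : CDtail (0 : CD V) = 0 by apply: CD_ext.
by case: b; rewrite /homog /= => ->; rewrite tail0.
Qed.

Lemma coefS_iter_Dop_embS (s : S) k m :
  coefS (iter k D (embS s)) m = if k == m then s else 0.
Proof.
rewrite coefS_iter_Dop coefS_embS; case: ltngtP => [ltkm|//|->]; last by rewrite subnn.
by rewrite -(subnSK ltkm).
Qed.

Lemma homogS_ind b (P : U -> Prop) :
  (forall s, homog b s -> P (embS s)) ->
  (forall A B, P A -> P B -> P (A + B)) ->
  (forall A, P A -> P (D A)) ->
  forall A, homog b A -> P A.
Proof.
move=> Pemb Padd PD.
suff PN N A : homog b A -> coefS_vanish A N -> P A.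
  by move=> A hA; apply: (PN (boundS A)) => //; apply: coefS_vanish_bound.
elim: N A => [|N IH] A hA vanA.
  have -> : A = embS 0 by apply: coefS_ext => k; rewrite coefS_embS vanA //; case: k.
  exact/Pemb/homog0.
rewrite (embS_add_Dop_tailS A); apply: Padd; first exact/Pemb/homog_coefS.
by apply/PD/IH => [|k leNk]; [exact: homog_tailS | apply: vanA].
Qed.

End PolynomialSpace.

Arguments Dop_linear {C S0 S1}.
Arguments coefS_linear {C S0 S1}.
Arguments coefS_vanish_bound {C S0 S1} A.
Arguments embS_linear {C S0 S1}.

Section ExtendedProducts.
Variables (C : comPzRingType) (S0 S1 : lmodType C).
Local Notation S := (S0 * S1)%type.
Local Notation U := (CD S0 * CD S1)%type.
Local Notation D := (@Dop C S0 S1).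
Variable F : nat -> S -> S -> U.
Hypothesis F_linl : forall n w, linear (F n ^~ w).
Hypothesis F_linr : forall n u, linear (F n u).

Let iter_D_lin k : linear (iter k D). Proof. exact/linear_iter/Dop_linear. Qed.

(* [monomial_prod n i j u v] is [(D^i u)_n (D^j v)] for [u, v] in [S]. *)
Definition monomial_prod n i j (u v : S) : U :=
  (-1) ^+ i *: \sum_(l < j.+1)
    ('C(j, l) * n ^_ (i + l))%:R *: iter (j - l) D (F (n - i - l) u v).

Lemma ext_prodE n (A B : U) : ext_prod F n A B =
  \sum_(i < boundS A) \sum_(j < boundS B) monomial_prod n i j (coefS A i) (coefS B j).
Proof. by []. Qed.

Lemma monomial_prod_linl n i j w : linear (monomial_prod n i j ^~ w).
Proof.
apply/linear_scale/linear_sum_fun => l; apply/linear_scale.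
exact: (linear_comp (iter_D_lin _) (F_linl _ _)).
Qed.

Lemma monomial_prod_linr n i j u : linear (monomial_prod n i j u).
Proof.
apply/linear_scale/linear_sum_fun => l; apply/linear_scale.
exact: (linear_comp (iter_D_lin _) (F_linr _ _)).
Qed.

Let monomial_prod0l n i j w : monomial_prod n i j 0 w = 0.
Proof. exact: linfun0 (monomial_prod_linl n i j w). Qed.
Let monomial_prod0r n i j u : monomial_prod n i j u 0 = 0.
Proof. exact: linfun0 (monomial_prod_linr n i j u). Qed.

(* [boundS] is an arbitrary choice of support bound; any other bound will do. *)
Lemma ext_prod_trunc n (A B : U) N M : coefS_vanish A N -> coefS_vanish B M ->
  ext_prod F n A B =
  \sum_(i < N) \sum_(j < M) monomial_prod n i j (coefS A i) (coefS B j).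
Proof.
move=> vanA vanB; rewrite ext_prodE.
have inner i : \sum_(j < boundS B) monomial_prod n i j (coefS A i) (coefS B j)
             = \sum_(j < M) monomial_prod n i j (coefS A i) (coefS B j).
  apply: (sumr_ord_vanish_eq (g := fun j => monomial_prod n i j _ (coefS B j))).
    by move=> j /coefS_bound ->.
  by move=> j /vanB ->.
under eq_bigr => i _ do rewrite inner.
apply: (sumr_ord_vanish_eq
  (g := fun i => \sum_(j < M) monomial_prod n i j (coefS A i) (coefS B j))).
  by move=> i /coefS_bound ->; apply: big1.
by move=> i /vanA ->; apply: big1.
Qed.

Lemma ext_prod_embS n (u v : S) : ext_prod F n (embS u) (embS v) = F n u v.
Proof.
have van1 (s : S) : coefS_vanish (embS s) 1 by case=> // i _; rewrite coefS_embS.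
rewrite (ext_prod_trunc n (van1 u) (van1 v)) !big_ord1 !coefS_embS.
by rewrite /monomial_prod big_ord1 expr0 ffactn0 muln1 bin0 !scale1r !subn0.
Qed.

Lemma ext_prod_linl n w : linear (ext_prod F n ^~ w).
Proof.
move=> a x y /=.
have vanx := coefS_vanish_le (leq_maxl (boundS x) (boundS y)) (coefS_vanish_bound x).
have vany := coefS_vanish_le (leq_maxr (boundS x) (boundS y)) (coefS_vanish_bound y).
have vanw := coefS_vanish_bound w.
rewrite (ext_prod_trunc n (coefS_vanish_lin a vanx vany) vanw).
rewrite (ext_prod_trunc n vanx vanw) (ext_prod_trunc n vany vanw).
rewrite scaler_sumr -big_split; apply: eq_bigr => i _.
rewrite scaler_sumr -big_split; apply: eq_bigr => j _.
by rewrite (coefS_linear i) monomial_prod_linl.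
Qed.

Lemma ext_prod_linr n u : linear (ext_prod F n u).
Proof.
move=> a x y /=.
have vanx := coefS_vanish_le (leq_maxl (boundS x) (boundS y)) (coefS_vanish_bound x).
have vany := coefS_vanish_le (leq_maxr (boundS x) (boundS y)) (coefS_vanish_bound y).
have vanu := coefS_vanish_bound u.
rewrite (ext_prod_trunc n vanu (coefS_vanish_lin a vanx vany)).
rewrite (ext_prod_trunc n vanu vanx) (ext_prod_trunc n vanu vany).
rewrite scaler_sumr -big_split; apply: eq_bigr => i _.
rewrite scaler_sumr -big_split; apply: eq_bigr => j _.
by rewrite (coefS_linear j) monomial_prod_linr.
Qed.

Lemma monomial_prodSl n i j u v :
  monomial_prod n i.+1 j u v = - (n%:R *: monomial_prod n.-1 i j u v).
Proof.
rewrite /monomial_prod exprS mulN1r scaleNr; congr (- _).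
rewrite scalerA mulrC -scalerA; congr (_ *: _); rewrite scaler_sumr.
apply: eq_bigr => l _; rewrite scalerA -natrM.
have -> : (n - i.+1 - l = n.-1 - i - l)%N by lia.
by rewrite addSn ffactnS mulnCA.
Qed.

(* Pascal's rule splits the sum for [j.+1] into [D] of the sum for [j] and a sum
   that cancels against the one for [i.+1]. *)
Lemma Dop_monomial_prod n i j u v :
  D (monomial_prod n i j u v) = monomial_prod n i.+1 j u v + monomial_prod n i j.+1 u v.
Proof.
pose T l := F (n - i - l) u v.
pose Sm := \sum_(l < j.+1) ('C(j, l) * n ^_ (i + l))%:R *: iter (j - l) D (T l).
pose B := \sum_(l < j.+1) ('C(j, l) * n ^_ (i + l.+1))%:R *: iter (j - l) D (T l.+1).
have -> : monomial_prod n i j.+1 u v = (-1) ^+ i *: (D Sm + B).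
  rewrite /monomial_prod big_ord_recl /= subn0 addn0 !bin0 mul1n.
  have -> : \sum_(l < j.+1) ('C(j.+1, lift ord0 l) * n ^_ (i + lift ord0 l))%:R *:
      iter (j.+1 - lift ord0 l) D (F (n - i - lift ord0 l) u v)
    = \sum_(l < j.+1) ('C(j, l.+1) * n ^_ (i + l.+1))%:R *: iter (j - l) D (T l.+1) + B.
    rewrite -big_split /=; apply: eq_bigr => l _.
    by rewrite /bump /= add1n binS mulnDl natrD scalerDl subSS.
  rewrite addrA; congr (_ *: (_ + _)).
  rewrite /Sm (linfun_sum Dop_linear) [RHS]big_ord_recl /= (linfunZ Dop_linear).
  rewrite subn0 addn0 bin0 mul1n /T subn0; congr (_ + _).
  rewrite big_ord_recr /= bin_small // mul0n scale0r addr0.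
  apply: eq_bigr => l _; rewrite /bump /= add1n (linfunZ Dop_linear).
  by have -> : (j - l = (j - l.+1).+1)%N by have := ltn_ord l; lia.
have -> : monomial_prod n i.+1 j u v = - ((-1) ^+ i *: B).
  rewrite /monomial_prod exprS mulN1r scaleNr; congr (- (_ *: _)).
  apply: eq_bigr => l _; rewrite addSnnS.
  by have -> : (n - i.+1 - l = n - i - l.+1)%N by lia.
by rewrite /monomial_prod (linfunZ Dop_linear) -/Sm scalerDr addrCA addNr addr0.
Qed.

Lemma ext_prod_Dopl_sum n (A B : U) : ext_prod F n (D A) B =
  \sum_(i < boundS A) \sum_(j < boundS B) monomial_prod n i.+1 j (coefS A i) (coefS B j).
Proof.
have vanDA : coefS_vanish (D A) (boundS A).+1.
  by case=> // i lt; rewrite coefS_Dop coefS_bound.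
rewrite (ext_prod_trunc n vanDA (coefS_vanish_bound B)) big_ord_recl big1 ?add0r.
  by apply: eq_bigr => i _; rewrite coefS_Dop.
by move=> j _; rewrite coefS_Dop monomial_prod0l.
Qed.

Lemma ext_prod_Dopr_sum n (A B : U) : ext_prod F n A (D B) =
  \sum_(i < boundS A) \sum_(j < boundS B) monomial_prod n i j.+1 (coefS A i) (coefS B j).
Proof.
have vanDB : coefS_vanish (D B) (boundS B).+1.
  by case=> // i lt; rewrite coefS_Dop coefS_bound.
rewrite (ext_prod_trunc n (coefS_vanish_bound A) vanDB); apply: eq_bigr => i _.
rewrite big_ord_recl coefS_Dop monomial_prod0r add0r.
by apply: eq_bigr => j _; rewrite coefS_Dop.
Qed.

Lemma ext_prod_Dopl n (A B : U) :
  ext_prod F n (D A) B = - (n%:R *: ext_prod F n.-1 A B).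
Proof.
rewrite ext_prod_Dopl_sum ext_prodE scaler_sumr -sumrN; apply: eq_bigr => i _.
by rewrite scaler_sumr -sumrN; apply: eq_bigr => j _; rewrite monomial_prodSl.
Qed.

Lemma Dop_ext_prod n (A B : U) :
  D (ext_prod F n A B) = ext_prod F n (D A) B + ext_prod F n A (D B).
Proof.
rewrite ext_prod_Dopl_sum ext_prod_Dopr_sum ext_prodE (linfun_sum Dop_linear).
rewrite -big_split; apply: eq_bigr => i _ /=.
rewrite (linfun_sum Dop_linear) -big_split; apply: eq_bigr => j _ /=.
exact: Dop_monomial_prod.
Qed.

Lemma homog_ext_prod bu bv (A B : U) n :
  (forall n bu bv (u v : S), homog bu u -> homog bv v -> homog (bu (+) bv) (F n u v)) ->
  homog bu A -> homog bv B -> homog (bu (+) bv) (ext_prod F n A B).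
Proof.
move=> homogF hA hB; rewrite ext_prodE; apply: homog_sum => i; apply: homog_sum => j.
apply/homogZ/homog_sum => l; apply/homogZ/homog_iter_Dop.
by apply: homogF; apply: homog_coefS.
Qed.

Lemma ext_prod_eventually0 (A B : U) :
  (forall n, (1 <= n)%N -> forall u v, F n u v = 0) ->
  exists N, forall n, (N <= n)%N -> ext_prod F n A B = 0.
Proof.
move=> F0; exists (boundS A + boundS B)%N => n le; rewrite ext_prodE.
apply: big1 => i _; apply: big1 => j _; rewrite /monomial_prod big1 ?scaler0 // => l _.
have := ltn_ord i; have := ltn_ord j; have := ltn_ord l => *.
by rewrite F0 ?(linfun0 (iter_D_lin _)) ?scaler0 //; lia.
Qed.

End ExtendedProducts.

Section LieToVertex.
Variables (C : numFieldType) (S0 S1 : lmodType C).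
Local Notation S := (S0 * S1)%type.
Local Notation U := (CD S0 * CD S1)%type.
Local Notation D := (@Dop C S0 S1).
Variable F : nat -> S -> S -> U.
Hypothesis F_linl : forall n w, linear (F n ^~ w).
Hypothesis F_linr : forall n u, linear (F n u).
Hypothesis F_homog : forall n bu bv (u v : S),
  homog bu u -> homog bv v -> homog (bu (+) bv) (F n u v).
Hypothesis F_eq0 : forall n, (1 <= n)%N -> forall u v, F n u v = 0.
Variable br : S -> S -> S.
Hypothesis br_Lie : is_LieSuperalgebra br.
Hypothesis F0_br : forall u v, F 0 u v = embS (br u v).
Local Notation prod := (ext_prod F).

Let D_lin : linear D. Proof. exact: Dop_linear. Qed.
Let br_linl w : linear (br ^~ w).
Proof. by case: br_Lie => lin _ a x y; exact: lin. Qed.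
Let br_linr u : linear (br u).
Proof. by case: br_Lie => _ [lin _] a x y; exact: lin. Qed.
Let prod_linl n w : linear (prod n ^~ w). Proof. exact: ext_prod_linl. Qed.
Let prod_linr n u : linear (prod n u). Proof. exact: ext_prod_linr. Qed.
Let prod_Dl n (A B : U) : prod n (D A) B = - (n%:R *: prod n.-1 A B).
Proof. exact: ext_prod_Dopl. Qed.
Let D_prod n (A B : U) : D (prod n A B) = prod n (D A) B + prod n A (D B).
Proof. exact: Dop_ext_prod. Qed.
Let prod_eventually0 (A B : U) : exists N, forall n, (N <= n)%N -> prod n A B = 0.
Proof. exact: ext_prod_eventually0. Qed.

Lemma ext_prod_embS_br n (x y : S) :
  prod n (embS x) (embS y) = embS (if n is 0 then br x y else 0).
Proof. by rewrite ext_prod_embS; case: n => [|n]; rewrite ?F0_br ?F_eq0 ?embS0. Qed.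

Lemma skew_symmetric_embS bu bv (x y : S) : homog bu x -> homog bv y ->
  skew_symmetric D prod (eps C bu bv) (embS x) (embS y).
Proof.
move=> hx hy; exists 1%N => n [//|M] _.
rewrite /skew_sum big_ord_recl big1 ?addr0 => [|k _]; last first.
  by rewrite ext_prod_embS_br addnS embS0 (linfun0 (linear_iter _ D_lin)) scaler0.
rewrite !ext_prod_embS_br addn0 /=; case: n => [|n]; last by rewrite embS0 !scaler0 oppr0.
case: br_Lie => _ [_ [_ [br_skew _]]].
rewrite /skew_coef expr0 mul1r invr1 scale1r (br_skew bu bv x y hx hy).
by rewrite (linfunN embS_linear) (linfunZ embS_linear).
Qed.

Lemma ext_prod_skew_symmetric bu bv (A B : U) : homog bu A -> homog bv B ->
  skew_symmetric D prod (eps C bu bv) A B.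
Proof.
move=> hA; move: A hA B.
have embB : forall A, homog bu A -> forall y, homog bv y ->
    skew_symmetric D prod (eps C bu bv) A (embS y).
  apply: homogS_ind => [x hx y hy|A1 A2 IH1 IH2 y hy|A IH y hy].
  - exact: skew_symmetric_embS.
  - exact: skew_symmetric_addl (IH1 y hy) (IH2 y hy).
  - exact: skew_symmetric_Dl (IH y hy).
move=> A hA; apply: homogS_ind => [y hy|B1 B2|B].
- exact: embB.
- exact: skew_symmetric_addr.
- exact: skew_symmetric_Dr.
Qed.

Lemma commutator_formula_embS bu bv bw (x y z : S) :
  homog bu x -> homog bv y -> homog bw z ->
  commutator_formula prod (eps C bu bv) (embS x) (embS y) (embS z).
Proof.
move=> hx hy hz m n; rewrite /comm_lhs /comm_rhs !ext_prod_embS_br.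
case: m => [|m]; case: n => [|n] /=.
- case: br_Lie => _ [_ [_ [_ br_jacobi]]].
  rewrite big_ord1 /= !ext_prod_embS_br bin0 scale1r (br_jacobi bu bv bw x y z hx hy hz).
  by rewrite -(linfunZ embS_linear) -(linfunB embS_linear) addrK.
all: rewrite ?(linfun0 (br_linr _)) embS0 scaler0 subr0; symmetry.
all: apply: big1 => -[[|i] lti] _ /=; rewrite !ext_prod_embS_br /= ?(linfun0 (br_linl _)).
all: by [rewrite embS0 scaler0 | case: (_ - _)%N => *; rewrite embS0 scaler0].
Qed.

Lemma ext_prod_commutator_formula bu bv bw (A B W : U) :
  homog bu A -> homog bv B -> homog bw W ->
  commutator_formula prod (eps C bu bv) A B W.
Proof.
have embBW : forall A, homog bu A -> forall y z, homog bv y -> homog bw z ->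
    commutator_formula prod (eps C bu bv) A (embS y) (embS z).
  apply: homogS_ind => [x hx y z hy hz|A1 A2 IH1 IH2 y z hy hz|A' IH y z hy hz].
  - exact: (commutator_formula_embS hx hy hz).
  - exact: commutator_formula_addu (IH1 y z hy hz) (IH2 y z hy hz).
  - exact: commutator_formula_Du (IH y z hy hz).
have embW : forall A, homog bu A -> forall B, homog bv B -> forall z, homog bw z ->
    commutator_formula prod (eps C bu bv) A B (embS z).
  move=> A' hA; apply: homogS_ind => [y hy z hz|B1 B2 IH1 IH2 z hz|B' IH z hz].
  - exact: embBW.
  - exact: commutator_formula_addv (IH1 z hz) (IH2 z hz).
  - exact: commutator_formula_Dv (IH z hz).
move=> hA hB; apply: homogS_ind => [z hz|W1 W2|W'].
- exact: embW.
- exact: commutator_formula_addw.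
- exact: commutator_formula_Dw.
Qed.

Theorem ext_prod_VLSA : is_VLSA D prod.
Proof.
split; first exact: D_lin.
split; first exact: homog_Dop.
split; first by move=> n a x y z; apply: prod_linl.
split; first by move=> n a x y z; apply: prod_linr.
split; first by move=> *; apply: prod_eventually0.
split; first by move=> bu bv A B n hA hB; apply: homog_ext_prod.
split; first by move=> *; apply: prod_Dl.
split; first by move=> *; apply: D_prod.
split.
  by move=> bu bv A B n M hA hB; apply/skew_symmetric_trunc/ext_prod_skew_symmetric.
move=> bu bv bw A B W k m n hA hB hW.
exact: (borcherds_of_commutator_formula (ext_prod_commutator_formula hA hB hW)).
Qed.

End LieToVertex.

Section VertexToLie.
Variables (C : numFieldType) (S0 S1 : lmodType C).
Local Notation S := (S0 * S1)%type.
Local Notation U := (CD S0 * CD S1)%type.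
Local Notation D := (@Dop C S0 S1).
Variable F : nat -> S -> S -> U.
Hypothesis F_linl : forall n w, linear (F n ^~ w).
Hypothesis F_linr : forall n u, linear (F n u).
Hypothesis F_homog : forall n bu bv (u v : S),
  homog bu u -> homog bv v -> homog (bu (+) bv) (F n u v).
Hypothesis F_in_S : forall n (u v : S), exists s : S, F n u v = embS s.
Hypothesis F_VLSA : is_VLSA D (ext_prod F).
Local Notation prod := (ext_prod F).

Lemma F_embS_coefS n u v : F n u v = embS (coefS (F n u v) 0).
Proof. by have [s ->] := F_in_S n u v; rewrite coefS_embS. Qed.

Let embS_prod n x y : prod n (embS x) (embS y) = F n x y.
Proof. exact: ext_prod_embS. Qed.

(* The [D^m]-coefficient of skew-symmetry for [u_0 v] isolates [v_m u / m!],
   while [u_0 v] lies in [S]. *)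
Lemma F_homog_eq0 m bu bv (u v : S) : (1 <= m)%N ->
  homog bu u -> homog bv v -> F m u v = 0.
Proof.
case: m => // m _ hu hv.
have hu' := (homog_embS bu u).2 hu; have hv' := (homog_embS bv v).2 hv.
have coefS_iter := @coefS_iter_Dop_embS _ S0 S1.
case: F_VLSA => _ [_ [_ [_ [prod_van [_ [_ [_ [prod_skew _]]]]]]]].
have [N vanN] := prod_van bu bv (embS u) (embS v) hu' hv'.
have [leNm|ltmN] := leqP N m.+1; first by rewrite -embS_prod vanN.
move: (prod_skew bv bu (embS v) (embS u) 0 N hv' hu' vanN).
move/(congr1 (fun A : U => coefS A m.+1)).
rewrite embS_prod F_embS_coefS coefS_embS (linfunN (coefS_linear _)).
rewrite (linfunZ (coefS_linear _)) (linfun_sum (coefS_linear _)).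
rewrite (bigD1 (Ordinal ltmN)) // big1 ?addr0 => [|k ne_km]; last first.
  rewrite (linfunZ (coefS_linear _)) embS_prod F_embS_coefS coefS_iter.
  by move: ne_km; rewrite -val_eqE /= => /negbTE ->; rewrite scaler0.
rewrite (linfunZ (coefS_linear _)) embS_prod F_embS_coefS coefS_iter /= eqxx.
move/esym/eqP; rewrite addr0 oppr_eq0 !scaler_eq0 /eps signr_eq0 mulf_eq0 signr_eq0.
by rewrite invr_eq0 pnatr_eq0 (negbTE (lt0n_neq0 (fact_gt0 _))) => /eqP ->; apply: embS0.
Qed.

Lemma F_eq0 n : (1 <= n)%N -> forall u v, F n u v = 0.
Proof.
move=> n_gt0; apply: (bilinear_homog_eq0 (F_linl n) (F_linr n)) => bu bv u v.
exact: F_homog_eq0.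
Qed.

Definition brF (u v : S) : S := coefS (F 0 u v) 0.

Lemma F0_brF u v : F 0 u v = embS (brF u v).
Proof. exact: F_embS_coefS. Qed.

Lemma brF_Lie : is_LieSuperalgebra brF.
Proof.
case: F_VLSA => _ [_ [_ [_ [_ [_ [_ [_ [prod_skew prod_borcherds]]]]]]]].
have embS_prod0 x y : prod 0 (embS x) (embS y) = embS (brF x y).
  by rewrite embS_prod F0_brF.
split; first by move=> a x y z; exact: (linear_comp (coefS_linear 0) (F_linl 0 z)).
split; first by move=> a x y z; exact: (linear_comp (coefS_linear 0) (F_linr 0 z)).
split.
  by move=> bu bv u v hu hv; apply/(homog_embS _ _).1; rewrite -F0_brF; apply: F_homog.
split.
  move=> bu bv u v hu hv.
  have hu' := (homog_embS bu u).2 hu; have hv' := (homog_embS bv v).2 hv.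
  have van1 m : (1 <= m)%N -> prod m (embS v) (embS u) = 0.
    by move=> m_gt0; rewrite embS_prod F_eq0.
  move: (prod_skew bu bv (embS u) (embS v) 0 1 hu' hv' van1).
  rewrite big_ord1 /= !embS_prod0 /skew_coef expr0 mul1r invr1 scale1r.
  by rewrite -(linfunZ embS_linear) -(linfunN embS_linear) => /embS_inj.
move=> bu bv bw u v w hu hv hw.
have hu' := (homog_embS bu u).2 hu; have hv' := (homog_embS bv v).2 hv.
have hw' := (homog_embS bw w).2 hw.
move: (prod_borcherds bu bv bw (embS u) (embS v) (embS w) 0 0 0 hu' hv' hw').
rewrite !big_ord1 /= expr0 mul1r bin0 !scale1r !embS_prod0.
rewrite -(linfunZ embS_linear) -(linfunB embS_linear) => /embS_inj/eqP.
by rewrite subr_eq => /eqP.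
Qed.

End VertexToLie.

Unset Implicit Arguments.
Local Open Scope complex_scope.

Theorem proposition7p6 (R : realType) (S0 S1 : lmodType R[i])
  (F : nat -> S0 * S1 -> S0 * S1 -> CD S0 * CD S1) :
  is_formula F ->
  (forall n (u v : S0 * S1), exists s : S0 * S1, F n u v = embS s) ->
  (is_VLSA (@Dop _ S0 S1) (ext_prod F) <->
   ((forall n, (1 <= n)%N -> forall u v : S0 * S1, F n u v = 0) /\
    exists br : S0 * S1 -> S0 * S1 -> S0 * S1,
      is_LieSuperalgebra br /\ forall u v : S0 * S1, F 0%N u v = embS (br u v))).
Proof.
case=> linl [linr [F_homog _]] F_in_S.
have F_linl n w : linear (F n ^~ w) by move=> a x y; apply: linl.
have F_linr n u : linear (F n u) by move=> a x y; apply: linr.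
split=> [F_VLSA | [F_vanish [br [br_Lie F0_br]]]].
  split; first exact: (F_eq0 F_linl F_linr F_in_S F_VLSA).
  exists (brF F); split; first exact: (brF_Lie F_linl F_linr F_homog F_in_S F_VLSA).
  exact: F0_brF.
exact: (ext_prod_VLSA F_linl F_linr F_homog F_vanish br_Lie F0_br).
Qed.
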